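(* Let $m\ge3$, let $w_0^2(m)=\big(\sum_{l=1}^{m-1}\frac{m-l}{l^2}\big)^{-1}$, for $k\ge0$ let $w_{k+1}^2(m)=w_k^2(m)+\big(\sum_{l=1}^{m-1}\frac{m-l}{l^2-w_k^2(m)}\big)^{-1}$ with $w_k(m)>0$, and put $\varepsilon_k(m)=1-w_k(m)$ and $q(m)=\frac{7m-6}{7m-4}$. Then for all $k=0,1,2,\dots$, $$\varepsilon_{k+1}(m)<\varepsilon_k(m)\,q(m),$$ and consequently $\varepsilon_{k+1}(m)<\varepsilon_0(m)\,q(m)^k$, where $\varepsilon_0(m)=1-\big[m\frac{\pi^2}{6}-m\psi'(m)-\gamma-\psi(m)\big]^{-1/2}\in(0,1)$.
   Context: $\psi$ denotes the digamma function and $\gamma$ the Euler–Mascheroni constant. *)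

From Stdlib Require Import Reals Lra.
From Coquelicot Require Import Coquelicot.
Open Scope R_scope.

Definition EulerGamma : R :=
  real (Lim_seq (fun n => sum_n_m (fun k => / INR k) 1 n - ln (INR n))).

Definition digamma (x : R) : R :=
  - EulerGamma + Series (fun n => / (INR n + 1) - / (INR n + x)).

Definition trigamma (x : R) : R :=
  Series (fun n => / (INR n + x) ^ 2).

Definition Ssum (m : nat) (a : R) : R :=
  sum_n_m (fun l => (INR m - INR l) / (INR l ^ 2 - a)) 1 (m - 1).

Fixpoint wsq (m : nat) (k : nat) : R :=
  match k with
  | O => / Ssum m 0
  | S k' => wsq m k' + / Ssum m (wsq m k')
  end.

(* w_k(m) > 0 is the positive square root. *)
Definition w (m k : nat) : R := sqrt (wsq m k).
Definition eps (m k : nat) : R := 1 - w m k.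
Definition q (m : nat) : R := (7 * INR m - 6) / (7 * INR m - 4).

From Stdlib Require Import Reals Lra Lia.
From Coquelicot Require Import Coquelicot.
Open Scope R_scope.

(* With a = w_k^2, split off the l = 1 term: S(m, a) = (m-1)/(1-a) + T.  Comparing the
   tail with the telescoping sum of m/(l(l-1)) gives 0 <= X := (1-a) T <= m, and then
   1 - w_{k+1}^2 = (1-a)(m-2+X)/(m-1+X) <= q(m) (1-a).  As w_k increases,
   1 - w = (1 - w^2)/(1 + w) contracts at least as fast.
   For eps_0, S(m, 0) = m H^(2)_{m-1} - H_{m-1}, while the defining series give
   psi'(m) = zeta(2) - H^(2)_{m-1} and psi(m) = -gamma + H_{m-1}.  Finally zeta(2) = pi^2/6
   follows from the integrals of cos^{2n} x and x^2 cos^{2n} x over [0, pi/2]: their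
   ratio r_n satisfies r_0 = pi^2/12, 1/(n+1)^2 = 2 (r_n - r_{n+1}) and r_n -> 0. *)

(** * zeta(2) via Wallis-type integrals *)

Lemma RInt_antiderivative (F f : R -> R) (a b : R) :
  (forall x, is_derive F x (f x)) -> (forall x, ex_derive f x) ->
  is_RInt f a b (F b - F a).
Proof.
  intros dF df. apply (is_RInt_derive F f); intros x _.
  - exact (dF x).
  - exact (ex_derive_continuous f x (df x)).
Qed.

Lemma ex_RInt_derivable (f : R -> R) (a b : R) :
  (forall x, ex_derive f x) -> ex_RInt f a b.
Proof.
  intro df. apply (ex_RInt_continuous (V := R_CompleteNormedModule)). intros x _.
  exact (ex_derive_continuous f x (df x)).
Qed.

Lemma is_RInt_unique_R (f : R -> R) (a b l l' : R) :
  is_RInt f a b l -> is_RInt f a b l' -> l = l'.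
Proof. intros H H'. now rewrite <- (is_RInt_unique f a b l H), (is_RInt_unique f a b l' H'). Qed.

Definition wallis (k : nat) : R := RInt (fun x => cos x ^ k) 0 (PI / 2).
Definition wallis_sq (k : nat) : R := RInt (fun x => x ^ 2 * cos x ^ k) 0 (PI / 2).

Lemma is_RInt_wallis k : is_RInt (fun x => cos x ^ k) 0 (PI / 2) (wallis k).
Proof. apply (RInt_correct (V := R_CompleteNormedModule)), ex_RInt_derivable. intro x. auto_derive. easy. Qed.

Lemma is_RInt_wallis_sq k : is_RInt (fun x => x ^ 2 * cos x ^ k) 0 (PI / 2) (wallis_sq k).
Proof. apply (RInt_correct (V := R_CompleteNormedModule)), ex_RInt_derivable. intro x. auto_derive. easy. Qed.

Lemma is_derive_sin_cos_pow k x :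
  is_derive (fun t => sin t * cos t ^ S k) x
    ((INR k + 2) * cos x ^ S (S k) - (INR k + 1) * cos x ^ k).
Proof.
  auto_derive; [easy|]. change (match k with 0%nat => 1 | S _ => INR k + 1 end) with (INR (S k)).
  rewrite S_INR. simpl pow.
  apply Rminus_diag_uniq.
  transitivity ((INR k + 1) * cos x ^ k * (1 - ((sin x)² + (cos x)²))).
  - unfold Rsqr. ring.
  - rewrite sin2_cos2. ring.
Qed.

Lemma wallis_rec k : (INR k + 2) * wallis (S (S k)) = (INR k + 1) * wallis k.
Proof.
  set (f := fun x => (INR k + 2) * cos x ^ S (S k) - (INR k + 1) * cos x ^ k).
  assert (comb : is_RInt f 0 (PI / 2) ((INR k + 2) * wallis (S (S k)) - (INR k + 1) * wallis k)).
  { apply (is_RInt_minus (fun x => (INR k + 2) * cos x ^ S (S k)) (fun x => (INR k + 1) * cos x ^ k));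
      apply (is_RInt_scal (fun x => cos x ^ _)), is_RInt_wallis. }
  assert (ftc : is_RInt f 0 (PI / 2) (sin (PI / 2) * cos (PI / 2) ^ S k - sin 0 * cos 0 ^ S k)).
  { apply (RInt_antiderivative (fun t => sin t * cos t ^ S k)); intro x.
    - apply is_derive_sin_cos_pow.
    - unfold f. auto_derive. easy. }
  rewrite cos_PI2, sin_0 in ftc. simpl in ftc.
  apply Rminus_diag_uniq. rewrite (is_RInt_unique_R f 0 (PI / 2) _ _ comb ftc). ring.
Qed.

Lemma wallis_sq_rec k :
  wallis (S (S k)) + (INR k + 2) ^ 2 / 2 * wallis_sq (S (S k))
  = (INR k + 2) * (INR k + 1) / 2 * wallis_sq k.
Proof.
  set (f := fun x => cos x ^ S (S k) + (INR k + 2) ^ 2 / 2 * (x ^ 2 * cos x ^ S (S k))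
                     - (INR k + 2) * (INR k + 1) / 2 * (x ^ 2 * cos x ^ k)).
  assert (comb : is_RInt f 0 (PI / 2)
     (wallis (S (S k)) + (INR k + 2) ^ 2 / 2 * wallis_sq (S (S k))
      - (INR k + 2) * (INR k + 1) / 2 * wallis_sq k)).
  { apply (is_RInt_minus (fun x => _ + _) (fun x => _ * _)).
    - apply (is_RInt_plus (fun x => cos x ^ _) (fun x => _ * _)).
      + apply is_RInt_wallis.
      + apply (is_RInt_scal (fun x => _ * _)), is_RInt_wallis_sq.
    - apply (is_RInt_scal (fun x => _ * _)), is_RInt_wallis_sq. }
  set (F := fun x => x * cos x ^ S (S k) + (INR k + 2) / 2 * (x ^ 2 * (sin x * cos x ^ S k))).
  assert (ftc : is_RInt f 0 (PI / 2) (F (PI / 2) - F 0)).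
  { apply (RInt_antiderivative F); intro x; unfold F, f.
    - auto_derive; [easy|].
      change (match k with 0%nat => 1 | S _ => INR k + 1 end) with (INR (S k)).
      rewrite S_INR. simpl pow. apply Rminus_diag_uniq.
      transitivity ((INR k + 2) / 2 * x ^ 2 * (INR k + 1) * cos x ^ k * (1 - ((sin x)² + (cos x)²))).
      + unfold Rsqr. field.
      + rewrite sin2_cos2. ring.
    - auto_derive. easy. }
  unfold F in ftc. rewrite cos_PI2 in ftc. simpl in ftc.
  apply Rminus_diag_uniq. rewrite (is_RInt_unique_R f 0 (PI / 2) _ _ comb ftc). ring.
Qed.

Lemma wallis_0 : wallis 0 = PI / 2.
Proof.
  assert (ftc : is_RInt (fun x => cos x ^ 0) 0 (PI / 2) (PI / 2 - 0)).
  { apply (RInt_antiderivative (fun x => x)); intro x; auto_derive; easy. }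
  rewrite (is_RInt_unique_R _ _ _ _ _ (is_RInt_wallis 0) ftc). ring.
Qed.

Lemma wallis_sq_0 : wallis_sq 0 = (PI / 2) ^ 3 / 3.
Proof.
  assert (ftc : is_RInt (fun x => x ^ 2 * cos x ^ 0) 0 (PI / 2) ((PI / 2) ^ 3 / 3 - 0 ^ 3 / 3)).
  { apply (RInt_antiderivative (fun x => x ^ 3 / 3)); intro x; auto_derive; try easy.
    simpl. field. }
  rewrite (is_RInt_unique_R _ _ _ _ _ (is_RInt_wallis_sq 0) ftc). simpl. field.
Qed.

Lemma x_mul_cos_le_sin x : 0 <= x <= PI / 2 -> x * cos x <= sin x.
Proof.
  intros [x_ge0 x_le]. pose proof PI_4.
  destruct (sin_bound x 0 x_ge0 ltac:(lra)) as [sin_lb _].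
  destruct (cos_bound x 0 ltac:(lra) x_le) as [_ cos_ub].
  unfold sin_approx, sin_term, cos_approx, cos_term in *. simpl in sin_lb, cos_ub.
  assert (x * x <= 4) by nra.
  assert (x * cos x <= x * (1 - x ^ 2 / 2 + x ^ 4 / 24)) by (apply Rmult_le_compat_l; lra).
  nra.
Qed.

Lemma wallis_sq_even_nonneg n : 0 <= wallis_sq (2 * n).
Proof.
  assert (zero_int : RInt (fun _ => 0) 0 (PI / 2) = 0).
  { rewrite RInt_const. apply Rmult_0_r. }
  rewrite <- zero_int. unfold wallis_sq.
  apply RInt_le.
  - pose proof PI_RGT_0. lra.
  - apply ex_RInt_derivable. intro x. auto_derive. easy.
  - apply ex_RInt_derivable. intro x. auto_derive. easy.
  - intros x _. rewrite pow_mult. apply Rmult_le_pos; [apply pow2_ge_0 | apply pow_le, pow2_ge_0].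
Qed.

Lemma wallis_sq_le k : wallis_sq (S (S k)) <= wallis k - wallis (S (S k)).
Proof.
  assert (diff_int : RInt (fun x => cos x ^ k - cos x ^ S (S k)) 0 (PI / 2)
                     = wallis k - wallis (S (S k))).
  { apply is_RInt_unique, (is_RInt_minus (fun x => cos x ^ _) (fun x => cos x ^ _));
      apply is_RInt_wallis. }
  rewrite <- diff_int.
  unfold wallis_sq. apply RInt_le.
  - pose proof PI_RGT_0. lra.
  - apply ex_RInt_derivable. intro x. auto_derive. easy.
  - apply ex_RInt_derivable. intro x. auto_derive. easy.
  - intros x Hx. simpl pow.
    assert (0 <= cos x) by (apply cos_ge_0; lra).
    assert (0 <= cos x ^ k) by (apply pow_le; lra).
    assert (0 <= x * cos x <= sin x).
    { split; [apply Rmult_le_pos; lra | apply x_mul_cos_le_sin; lra]. }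
    pose proof (sin2_cos2 x) as pythagoras. unfold Rsqr in pythagoras.
    assert (x * cos x * (x * cos x) <= sin x * sin x) by nra.
    nra.
Qed.

Definition wallis_ratio (n : nat) : R := wallis_sq (2 * n) / wallis (2 * n).

Lemma wallis_ratio_0 : wallis_ratio 0 = PI ^ 2 / 12.
Proof. unfold wallis_ratio. simpl. rewrite wallis_0, wallis_sq_0. field. apply PI_neq0. Qed.

Lemma INR_double n : INR (2 * n) = 2 * INR n.
Proof. rewrite mult_INR. simpl. ring. Qed.

Lemma wallis_even_succ n :
  wallis (2 * S n) = (2 * INR n + 1) / (2 * INR n + 2) * wallis (2 * n).
Proof.
  replace (2 * S n)%nat with (S (S (2 * n))) by lia.
  pose proof (wallis_rec (2 * n)) as rec. rewrite INR_double in rec.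
  pose proof (pos_INR n).
  apply (Rmult_eq_reg_l (2 * INR n + 2)); [|lra].
  rewrite rec. field. lra.
Qed.

Lemma wallis_even_pos n : 0 < wallis (2 * n).
Proof.
  induction n as [|n IH].
  - simpl. rewrite wallis_0. pose proof PI_RGT_0. lra.
  - rewrite wallis_even_succ. pose proof (pos_INR n).
    apply Rmult_lt_0_compat; [apply Rdiv_lt_0_compat|]; lra.
Qed.

Lemma wallis_sq_even_succ n :
  wallis_sq (2 * S n)
  = (2 * INR n + 1) / (2 * INR n + 2) * wallis_sq (2 * n) - 2 / (2 * INR n + 2) ^ 2 * wallis (2 * S n).
Proof.
  pose proof (wallis_sq_rec (2 * n)) as rec. rewrite INR_double in rec.
  replace (2 * S n)%nat with (S (S (2 * n))) by lia.
  pose proof (pos_INR n).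
  apply (Rmult_eq_reg_l ((2 * INR n + 2) ^ 2 / 2)); [|nra].
  transitivity ((2 * INR n + 2) * (2 * INR n + 1) / 2 * wallis_sq (2 * n) - wallis (S (S (2 * n)))).
  - lra.
  - field. lra.
Qed.

Lemma wallis_ratio_diff n : / (INR n + 1) ^ 2 = 2 * (wallis_ratio n - wallis_ratio (S n)).
Proof.
  unfold wallis_ratio. rewrite wallis_sq_even_succ, wallis_even_succ.
  pose proof (wallis_even_pos n). pose proof (pos_INR n).
  field. lra.
Qed.

Lemma wallis_ratio_succ_bounds n : 0 <= wallis_ratio (S n) <= / (2 * INR n + 1).
Proof.
  unfold wallis_ratio. split.
  - apply Rdiv_le_0_compat; [apply wallis_sq_even_nonneg | apply wallis_even_pos].
  - pose proof (wallis_sq_le (2 * n)) as le_sq. pose proof (wallis_even_pos (S n)) as A'_pos.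
    replace (S (S (2 * n))) with (2 * S n)%nat in le_sq by lia.
    rewrite wallis_even_succ in *. pose proof (wallis_even_pos n). pose proof (pos_INR n).
    apply Rle_trans with ((wallis (2 * n) - (2 * INR n + 1) / (2 * INR n + 2) * wallis (2 * n))
                          / ((2 * INR n + 1) / (2 * INR n + 2) * wallis (2 * n))).
    + apply Rmult_le_compat_r; [left; apply Rinv_0_lt_compat|]; lra.
    + right. field. lra.
Qed.

Lemma sum_inv_sq_wallis N :
  sum_n (fun j => / (INR j + 1) ^ 2) N = PI ^ 2 / 6 - 2 * wallis_ratio (S N).
Proof.
  induction N as [|N IH].
  - rewrite sum_O, wallis_ratio_diff, wallis_ratio_0. simpl. lra.
  - rewrite sum_Sn, IH, (wallis_ratio_diff (S N)). unfold plus. simpl. ring.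
Qed.

Lemma is_lim_seq_inv_succ (c : R) : 0 <= c -> is_lim_seq (fun n => / (INR n + 1 + c)) 0.
Proof.
  intro c_ge0. apply is_lim_seq_le_le with (u := fun _ => 0) (w := fun n => / INR (S n)).
  - intro n. pose proof (pos_INR n). rewrite S_INR. split.
    + left. apply Rinv_0_lt_compat. lra.
    + apply Rinv_le_contravar; lra.
  - apply is_lim_seq_const.
  - apply (is_lim_seq_inv (fun n => INR (S n)) p_infty); [|discriminate].
    apply (is_lim_seq_incr_1 INR p_infty), is_lim_seq_INR.
Qed.

Lemma basel : is_series (fun j => / (INR j + 1) ^ 2) (PI ^ 2 / 6).
Proof.
  enough (lim : is_lim_seq (sum_n (fun j => / (INR j + 1) ^ 2)) (PI ^ 2 / 6)) by exact lim.
  apply is_lim_seq_le_le with (u := fun N => PI ^ 2 / 6 - 2 * / (INR N + 1 + 0)) (w := fun _ => PI ^ 2 / 6).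
  - intro N. rewrite sum_inv_sq_wallis. pose proof (wallis_ratio_succ_bounds N). pose proof (pos_INR N).
    assert (/ (2 * INR N + 1) <= / (INR N + 1 + 0)) by (apply Rinv_le_contravar; lra). lra.
  - assert (lim : is_lim_seq (fun N => PI ^ 2 / 6 - 2 * / (INR N + 1 + 0)) (PI ^ 2 / 6 - 2 * 0)).
    { apply is_lim_seq_minus'; [apply is_lim_seq_const|].
      apply (is_lim_seq_scal_l _ 2 0), is_lim_seq_inv_succ. lra. }
    rewrite Rmult_0_r, Rminus_0_r in lim. exact lim.
  - apply is_lim_seq_const.
Qed.

(** * Trigamma and digamma at positive integers *)

Lemma sum_n_m_telescope (u : nat -> R) n p :
  (n <= S p)%nat -> sum_n_m (fun l => u l - u (S l)) n p = u n - u (S p).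
Proof.
  revert n. induction p as [|p IH]; intros n n_le.
  - destruct n as [|[|n]]; try lia.
    + rewrite sum_n_n. reflexivity.
    + rewrite sum_n_m_zero by lia. unfold zero. simpl. ring.
  - destruct (Nat.eq_dec n (S (S p))) as [->|n_ne].
    + rewrite sum_n_m_zero by lia. unfold zero. simpl. ring.
    + rewrite sum_n_Sm, IH by lia. unfold plus. simpl. ring.
Qed.

Lemma is_series_telescope (u : nat -> R) :
  is_lim_seq u 0 -> is_series (fun n => u n - u (S n)) (u 0%nat).
Proof.
  intro u_lim.
  assert (lim : is_lim_seq (fun N => u 0%nat - u (S N)) (u 0%nat - 0)).
  { apply is_lim_seq_minus'; [apply is_lim_seq_const|].
    apply (is_lim_seq_incr_1 u 0), u_lim. }
  rewrite Rminus_0_r in lim.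
  apply (is_lim_seq_ext _ _ _ (fun N => eq_sym (sum_n_m_telescope u 0 N (Nat.le_0_l _))) lim).
Qed.

Definition harmonic (n : nat) : R := sum_n_m (fun l => / INR l) 1 n.
Definition harmonic2 (n : nat) : R := sum_n_m (fun l => / INR l ^ 2) 1 n.

Lemma harmonic_0 : harmonic 0 = 0.
Proof. unfold harmonic. rewrite sum_n_m_zero by lia. reflexivity. Qed.

Lemma harmonic2_0 : harmonic2 0 = 0.
Proof. unfold harmonic2. rewrite sum_n_m_zero by lia. reflexivity. Qed.

Lemma harmonic_S n : harmonic (S n) = harmonic n + / INR (S n).
Proof. unfold harmonic. rewrite sum_n_Sm by lia. reflexivity. Qed.

Lemma harmonic2_S n : harmonic2 (S n) = harmonic2 n + / INR (S n) ^ 2.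
Proof. unfold harmonic2. rewrite sum_n_Sm by lia. reflexivity. Qed.

Lemma is_series_trigamma_nat j :
  is_series (fun n => / (INR n + INR (S j)) ^ 2) (PI ^ 2 / 6 - harmonic2 j).
Proof.
  induction j as [|j IH].
  - rewrite harmonic2_0, Rminus_0_r. exact basel.
  - apply (is_series_ext (fun n => / (INR (S n) + INR (S j)) ^ 2)).
    { intro n. rewrite !S_INR. f_equal. ring. }
    apply (is_series_incr_1 (fun n => / (INR n + INR (S j)) ^ 2)).
    rewrite harmonic2_S. simpl INR at 3. rewrite Rplus_0_l.
    replace (plus _ _) with (PI ^ 2 / 6 - harmonic2 j) by (unfold plus; simpl; ring).
    exact IH.
Qed.

Lemma is_series_digamma_nat j :
  is_series (fun n => / (INR n + 1) - / (INR n + INR (S j))) (harmonic j).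
Proof.
  induction j as [|j IH].
  - rewrite harmonic_0.
    apply (is_series_ext (fun n => (fun _ => 0) n - (fun _ => 0) (S n))).
    { intro n. simpl INR. rewrite !Rminus_diag. reflexivity. }
    apply (is_series_telescope (fun _ => 0)), is_lim_seq_const.
  - set (u := fun n => / (INR n + INR (S j))).
    assert (tele : is_series (fun n => u n - u (S n)) (u 0%nat)).
    { apply is_series_telescope.
      apply (is_lim_seq_ext (fun n => / (INR n + 1 + INR j))).
      - intro n. unfold u. rewrite S_INR. f_equal. ring.
      - apply is_lim_seq_inv_succ, pos_INR. }
    replace (harmonic (S j)) with (plus (harmonic j) (u 0%nat))
      by (rewrite harmonic_S; unfold u, plus; simpl; f_equal; f_equal; ring).
    apply (is_series_ext (fun n => plus (/ (INR n + 1) - u n) (u n - u (S n)))).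
    2: exact (is_series_plus _ _ _ _ IH tele).
    intro n. unfold u, plus. cbn -[INR].
    replace (INR (S n) + INR (S j)) with (INR n + INR (S (S j))) by (rewrite !S_INR; ring).
    ring.
Qed.

Lemma Ssum_0 m : Ssum m 0 = INR m * harmonic2 (m - 1) - harmonic (m - 1).
Proof.
  unfold Ssum. induction (m - 1)%nat as [|N IH].
  - rewrite harmonic_0, harmonic2_0, sum_n_m_zero by lia. unfold zero. simpl. ring.
  - rewrite sum_n_Sm, IH, harmonic_S, harmonic2_S by lia. unfold plus. cbn -[INR pow].
    assert (INR (S N) <> 0) by (apply not_0_INR; lia).
    field. assumption.
Qed.

Lemma Ssum_0_polygamma m : (1 <= m)%nat ->
  Ssum m 0 = INR m * (PI ^ 2 / 6) - INR m * trigamma (INR m) - EulerGamma - digamma (INR m).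
Proof.
  intro m_ge1. unfold trigamma, digamma.
  pose proof (is_series_trigamma_nat (m - 1)) as tri.
  pose proof (is_series_digamma_nat (m - 1)) as di.
  replace (S (m - 1)) with m in tri, di by lia.
  rewrite (is_series_unique _ _ tri), (is_series_unique _ _ di), Ssum_0.
  ring.
Qed.

(** * Contraction of the gap 1 - w_k *)

Lemma sum_n_m_le_loc (a b : nat -> R) n p :
  (forall k, (n <= k <= p)%nat -> a k <= b k) -> sum_n_m a n p <= sum_n_m b n p.
Proof.
  induction p as [|p IH]; intro le_ab.
  - destruct n as [|n].
    + rewrite !sum_n_n. apply le_ab. lia.
    + rewrite !sum_n_m_zero by lia. apply Rle_refl.
  - destruct (Nat.le_gt_cases n (S p)) as [n_le|n_gt].
    + rewrite !sum_n_Sm by exact n_le.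
      apply Rplus_le_compat; [apply IH | apply le_ab]; intros; try apply le_ab; lia.
    + rewrite !sum_n_m_zero by exact n_gt. apply Rle_refl.
Qed.

Definition Stail (m : nat) (a : R) : R :=
  sum_n_m (fun l => (INR m - INR l) / (INR l ^ 2 - a)) 2 (m - 1).

Lemma Ssum_split m a : (2 <= m)%nat -> Ssum m a = (INR m - 1) / (1 - a) + Stail m a.
Proof.
  intro m_ge2. unfold Ssum, Stail. rewrite sum_Sn_m by lia.
  unfold plus. simpl. do 2 f_equal. ring.
Qed.

Lemma Stail_nonneg m a : 0 <= a < 1 -> 0 <= Stail m a.
Proof.
  intro a_bounds. unfold Stail.
  apply Rle_trans with (sum_n_m (fun _ => 0) 2 (m - 1)).
  { right. symmetry. apply (sum_n_m_const_zero (G := R_AbelianGroup)). }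
  apply sum_n_m_le_loc. intros l l_bounds.
  assert (2 <= INR l) by (apply (le_INR 2); lia).
  assert (INR l <= INR m) by (apply le_INR; lia).
  apply Rdiv_le_0_compat; nra.
Qed.

Lemma Stail_term_le (M x a : R) : 2 <= x <= M -> 0 <= a < 1 ->
  (1 - a) * ((M - x) / (x ^ 2 - a)) <= M / (x - 1) - M / x.
Proof.
  intros x_bounds a_bounds.
  replace (M / (x - 1) - M / x) with (M / (x * (x - 1))) by (field; lra).
  unfold Rdiv. rewrite <- Rmult_assoc.
  apply Rle_trans with (M * / (x ^ 2 - a)).
  - apply Rmult_le_compat_r; [left; apply Rinv_0_lt_compat|]; nra.
  - apply Rmult_le_compat_l; [lra|]. apply Rinv_le_contravar; nra.
Qed.

Lemma Stail_le m a : (2 <= m)%nat -> 0 <= a < 1 -> (1 - a) * Stail m a <= INR m.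
Proof.
  intros m_ge2 a_bounds. unfold Stail.
  rewrite <- (sum_n_m_mult_l (K := R_Ring)).
  set (u := fun l => INR m / (INR l - 1)).
  apply Rle_trans with (sum_n_m (fun l => u l - u (S l)) 2 (m - 1)).
  - apply sum_n_m_le_loc. intros l l_bounds. unfold u.
    replace (INR (S l) - 1) with (INR l) by (rewrite S_INR; ring).
    apply Stail_term_le; [split|assumption].
    + apply (le_INR 2). lia.
    + apply le_INR. lia.
  - rewrite sum_n_m_telescope by lia. replace (S (m - 1)) with m by lia. unfold u.
    assert (1 < INR m) by (apply (lt_INR 1); lia).
    assert (0 <= INR m / (INR m - 1)) by (apply Rdiv_le_0_compat; lra).
    simpl. lra.
Qed.

Lemma gap_after_step (M a T : R) : 3 <= M -> a < 1 -> 0 <= T -> (1 - a) * T <= M ->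
  0 < 1 - (a + / ((M - 1) / (1 - a) + T)) <= (7 * M - 6) / (7 * M - 4) * (1 - a).
Proof.
  intros M_ge3 a_lt1 T_ge0 T_le.
  set (X := (1 - a) * T) in *.
  assert (X_ge0 : 0 <= X) by (apply Rmult_le_pos; lra).
  replace (1 - (a + / ((M - 1) / (1 - a) + T))) with ((1 - a) * ((M - 2 + X) / (M - 1 + X)))
    by (unfold X; field; split; nra).
  split.
  - apply Rmult_lt_0_compat; [|apply Rdiv_lt_0_compat]; lra.
  - rewrite (Rmult_comm (1 - a)). apply Rmult_le_compat_r; [lra|].
    apply Rmult_le_reg_r with ((M - 1 + X) * (7 * M - 4)); [nra|].
    replace ((M - 2 + X) / (M - 1 + X) * ((M - 1 + X) * (7 * M - 4)))
      with ((M - 2 + X) * (7 * M - 4)) by (field; lra).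
    replace ((7 * M - 6) / (7 * M - 4) * ((M - 1 + X) * (7 * M - 4)))
      with ((7 * M - 6) * (M - 1 + X)) by (field; lra).
    nra.
Qed.

Lemma INR_ge3 m : (3 <= m)%nat -> 3 <= INR m.
Proof. intro m_ge3. apply (le_INR 3) in m_ge3. simpl in m_ge3. lra. Qed.

Lemma Ssum_pos m a : (3 <= m)%nat -> 0 <= a < 1 -> 0 < Ssum m a.
Proof.
  intros m_ge3 a_bounds. pose proof (INR_ge3 m m_ge3).
  rewrite Ssum_split by lia. pose proof (Stail_nonneg m a a_bounds).
  assert (0 < (INR m - 1) / (1 - a)) by (apply Rdiv_lt_0_compat; lra). lra.
Qed.

Lemma Ssum_gap m a : (3 <= m)%nat -> 0 <= a < 1 ->
  0 < 1 - (a + / Ssum m a) <= q m * (1 - a).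
Proof.
  intros m_ge3 a_bounds. rewrite Ssum_split by lia.
  apply gap_after_step; [apply INR_ge3; lia | lra | apply Stail_nonneg; lra | apply Stail_le; [lia | lra]].
Qed.

Lemma wsq_bounds m k : (3 <= m)%nat -> 0 < wsq m k < 1.
Proof.
  intro m_ge3. induction k as [|k IH]; simpl.
  - pose proof (Ssum_pos m 0 m_ge3). pose proof (Ssum_gap m 0 m_ge3).
    split; [apply Rinv_0_lt_compat|]; lra.
  - pose proof (Ssum_pos m (wsq m k) m_ge3). pose proof (Ssum_gap m (wsq m k) m_ge3).
    assert (0 < / Ssum m (wsq m k)) by (apply Rinv_0_lt_compat; lra). lra.
Qed.

Lemma one_sub_sqrt_contract (a a' c : R) : 0 <= a < a' -> a < 1 -> 0 < c ->
  1 - a' <= c * (1 - a) -> 1 - sqrt a' < c * (1 - sqrt a).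
Proof.
  intros a_lt a_lt1 c_pos gap.
  pose proof (sqrt_lt_1 a a' (proj1 a_lt) ltac:(lra) (proj2 a_lt)) as sqrt_lt.
  pose proof (sqrt_sqrt a (proj1 a_lt)). pose proof (sqrt_sqrt a' ltac:(lra)).
  assert (sqrt a < 1) by (rewrite <- sqrt_1; apply sqrt_lt_1; lra).
  destruct (Rlt_or_le (1 - sqrt a') (c * (1 - sqrt a))) as [|not_lt]; [assumption|].
  pose proof (sqrt_pos a').
  assert (c * (1 - sqrt a) * (1 + sqrt a') <= (1 - sqrt a') * (1 + sqrt a'))
    by (apply Rmult_le_compat_r; lra).
  assert (0 < c * (1 - sqrt a) * (sqrt a' - sqrt a)) by (apply Rmult_lt_0_compat; nra).
  nra.
Qed.

Lemma q_bounds m : (1 <= m)%nat -> 0 < q m < 1.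
Proof.
  intro m_ge1. apply (le_INR 1) in m_ge1. simpl in m_ge1. unfold q. split.
  - apply Rdiv_lt_0_compat; lra.
  - apply Rlt_div_l; lra.
Qed.

Lemma eps_succ_lt m k : (3 <= m)%nat -> eps m (S k) < eps m k * q m.
Proof.
  intro m_ge3. pose proof (wsq_bounds m k m_ge3) as bounds.
  pose proof (Ssum_pos m (wsq m k) m_ge3). pose proof (Ssum_gap m (wsq m k) m_ge3 ltac:(lra)).
  assert (0 < / Ssum m (wsq m k)) by (apply Rinv_0_lt_compat; lra).
  unfold eps, w. rewrite Rmult_comm. simpl wsq.
  apply one_sub_sqrt_contract; try lra. apply q_bounds. lia.
Qed.

Lemma lt_geometric (e : nat -> R) (c : R) : 0 <= c <= 1 -> 0 <= e 0%nat ->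
  (forall k, e (S k) < e k * c) -> forall k, e (S k) < e 0%nat * c ^ k.
Proof.
  intros c_bounds e0_ge0 step.
  assert (le_geom : forall k, e k <= e 0%nat * c ^ k).
  { induction k as [|k IH]; simpl.
    - lra.
    - pose proof (step k). nra. }
  intro k. pose proof (step k). pose proof (le_geom k).
  assert (0 <= e 0%nat * c ^ k) by (apply Rmult_le_pos; [|apply pow_le]; lra).
  nra.
Qed.

Lemma eps_0_bounds m : (3 <= m)%nat -> 0 < eps m 0 < 1.
Proof.
  intro m_ge3. pose proof (wsq_bounds m 0 m_ge3). unfold eps, w.
  assert (0 < sqrt (wsq m 0)) by (apply sqrt_lt_R0; lra).
  assert (sqrt (wsq m 0) < 1) by (rewrite <- sqrt_1; apply sqrt_lt_1; lra).
  lra.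
Qed.

Theorem corollary4 (m : nat) (hm : (3 <= m)%nat) :
  (forall k : nat, eps m (S k) < eps m k * q m) /\
  (forall k : nat, eps m (S k) < eps m 0 * q m ^ k) /\
  eps m 0 = 1 - / sqrt (INR m * (PI ^ 2 / 6) - INR m * trigamma (INR m)
                         - EulerGamma - digamma (INR m)) /\
  0 < eps m 0 < 1.
Proof.
  pose proof (eps_0_bounds m hm) as eps0_bounds.
  pose proof (q_bounds m ltac:(lia)) as q_range.
  split; [|split; [|split]].
  - intro k. apply eps_succ_lt, hm.
  - apply lt_geometric; [lra | lra |]. intro k. apply eps_succ_lt, hm.
  - unfold eps, w. simpl wsq. rewrite sqrt_inv, <- Ssum_0_polygamma by lia. reflexivity.
  - exact eps0_bounds.
Qed.
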